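(* Let $N\ge2$, $x_1>\cdots>x_N$ real, and $\mathbf A\in\{-1,1\}^{N\times N}$ with $\mathbf A_{i,n}=\mathrm{sign}(x_i-x_n)$. Then $\mathbf A$ is invertible and $$\mathbf A^{-1}=\frac12\begin{pmatrix}\Delta & -\mathbf e\\ \mathbf e_1^T & 1\end{pmatrix},$$ where $\mathbf e=(0,\dots,0,1)^T\in\mathbb R^{N-1}$ and $\mathbf e_1=(1,0,\dots,0)^T\in\mathbb R^{N-1}$.
   Context: $\mathrm{sign}(x)=1$ if $x\ge0$ and $-1$ if $x<0$. $\Delta\in\mathbb R^{(N-1)\times(N-1)}$ is the finite difference matrix with $\Delta_{i,i}=1$, $\Delta_{i,i+1}=-1$, and all other entries $0$. *)

From HB Require Import structures.
From mathcomp Require Import all_boot all_order all_algebra.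
Set Implicit Arguments. Unset Strict Implicit. Unset Printing Implicit Defensive.
Import Order.TTheory GRing.Theory Num.Theory.
Local Open Scope ring_scope.

Definition sgn {R : realFieldType} (x : R) : R := if 0 <= x then 1 else -1.

Definition Delta {R : pzRingType} (m : nat) : 'M[R]_m :=
  \matrix_(i < m, j < m)
    (if (j == i :> nat) then 1 else if (j == i.+1 :> nat) then -1 else 0).

Definition e_last {R : pzRingType} (m : nat) : 'cV[R]_m.+1 :=
  \col_(i < m.+1) (if (i == m :> nat) then 1 else 0).
Definition e_first {R : pzRingType} (m : nat) : 'cV[R]_m.+1 :=
  \col_(i < m.+1) (if (i == 0 :> nat) then 1 else 0).

Definition signmx {R : realFieldType} (N : nat) (x : 'I_N -> R) : 'M[R]_N :=
  \matrix_(i < N, k < N) sgn (x i - x k).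

From HB Require Import structures.
From mathcomp Require Import all_boot all_order all_algebra.
Import Order.TTheory GRing.Theory Num.Theory.
Local Open Scope ring_scope.

(* Since x is decreasing, A has 1 on and above the diagonal and -1 below it.
   Row i < N-1 of the claimed inverse is (e_i - e_(i+1))/2, and consecutive
   rows of A differ only in column i, by 2; the last row (e_1 + e_N)/2
   averages the all-ones first row of A with its last row, which is -1 except
   for a 1 in the last column. So the claimed matrix is a left inverse of A. *)

Lemma sum_nat_indicator (R : pzSemiRingType) (N p : nat) (F : nat -> R) :
  \sum_(k < N) (k == p :> nat)%:R * F k = if (p < N)%N then F p else 0.
Proof.
rewrite -(big_ord1_eq +%R) [RHS]big_mkcond; apply: eq_bigr => k _.
by case: eqP; rewrite ?mul1r ?mul0r.
Qed.

Definition upper_sign_mx {R : pzRingType} (N : nat) : 'M[R]_N :=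
  \matrix_(i < N, k < N) if (i <= k)%N then 1 else -1.

Lemma signmx_decreasing (R : realFieldType) (N : nat) (x : 'I_N -> R) :
  (forall i j : 'I_N, (i < j)%N -> x j < x i) -> signmx x = upper_sign_mx N.
Proof.
move=> x_decr; apply/matrixP => i k; rewrite !mxE /sgn subr_ge0.
case: ltngtP => [ik|ki|/val_inj ->]; last by rewrite lexx.
- by rewrite ltW ?x_decr.
- by rewrite leNgt x_decr.
Qed.

Section SignInverse.
Variables (R : numFieldType) (n : nat).

Definition sign_inv_mx : 'M[R]_(n.+2) :=
  castmx (addn1 n.+1, addn1 n.+1)
    ((1 / 2 : R) *: block_mx (Delta n.+1) (- e_last n)
                             (e_first n)^T (1 : 'M[R]_1)).

Lemma sign_inv_mxE (i k : 'I_(n.+2)) :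
  sign_inv_mx i k = 2^-1 *
    (if (i < n.+1)%N then (k == i :> nat)%:R - (k == i.+1 :> nat)%:R
     else (k == 0 :> nat)%:R + (k == n.+1 :> nat)%:R).
Proof.
rewrite castmxE mxE div1r; congr (_ * _).
rewrite /block_mx !mxE.
case: splitP => a /= ->; rewrite mxE; case: splitP => b /= ->; rewrite !mxE.
- rewrite ltn_ord; have [->|_] := eqVneq (b : nat) a.
    by rewrite (ltn_eqF (ltnSn a)) subr0.
  by case: (_ == _); rewrite sub0r ?oppr0.
- rewrite (ord1 b) addn0 ltn_ord (gtn_eqF (ltn_ord a)) eqSS sub0r eq_sym.
  by case: (_ == _).
- rewrite ltnNge leq_addr /= (ltn_eqF (ltn_ord b)) addr0.
  by case: (_ == _).
- by rewrite (ord1 a) (ord1 b) addn0 ltnn !eqxx add0r.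
Qed.

Lemma sign_inv_mxK : sign_inv_mx *m upper_sign_mx n.+2 = 1%:M.
Proof.
apply/matrixP => i j; rewrite !mxE -val_eqE /=.
pose u (k : nat) : R := if (k <= j)%N then 1 else -1.
under eq_bigr => k _ do rewrite sign_inv_mxE mxE -mulrA -/(u k).
rewrite -mulr_sumr; case: ltnP => [i_lt | i_ge].
- under eq_bigr do rewrite mulrBl.
  rewrite sumrB !(sum_nat_indicator _ _ _ u) ltn_ord ltnS i_lt /u.
  case: ltngtP => _; rewrite ?subrr ?mulr0 // opprK.
  by rewrite mulVf ?pnatr_eq0.
- have -> : (i : nat) = n.+1 by apply/eqP; rewrite eqn_leq -ltnS ltn_ord.
  under eq_bigr do rewrite mulrDl.
  rewrite big_split !(sum_nat_indicator _ _ _ u) /= ltnSn /u leq0n.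
  rewrite leq_eqVlt ltnNge -ltnS ltn_ord orbF eq_sym.
  by case: (_ == _); rewrite ?addrN ?mulr0 ?mulVf ?pnatr_eq0.
Qed.

End SignInverse.

Theorem lemma21 (R : realFieldType) (n : nat) (x : 'I_(n.+2) -> R)
  (hx : forall i j : 'I_(n.+2), (i < j)%N -> x j < x i) :
  signmx x \in unitmx /\
  invmx (signmx x) =
    castmx (addn1 n.+1, addn1 n.+1)
      ((1 / 2 : R) *: block_mx (Delta n.+1) (- e_last n)
                               (e_first n)^T (1 : 'M[R]_1)).
Proof.
have BA : sign_inv_mx R n *m signmx x = 1%:M.
  by rewrite signmx_decreasing // sign_inv_mxK.
have [_ A_unit] := mulmx1_unit BA.
split=> //.
by rewrite -[invmx _]mul1mx -BA mulmxK.
Qed.
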